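(* Let $F$, $G$, $\Pi$ be as in the context. For $(\xi,z)\in\Sigma_N\times I$ and $(\omega,x)\in\Sigma_A\times I$ let $\nu_n(\xi,z)=\frac1n\sum_{i=0}^{n-1}\delta_{F^i(\xi,z)}$ and $\mu_n(\omega,x)=\frac1n\sum_{i=0}^{n-1}\delta_{G^i(\omega,x)}$. If $\nu_n(\Pi(\omega,x))\to\nu$ in the weak$*$ topology as $n\to\infty$ and $\mu$ is a weak$*$ limit point of the sequence $(\mu_n(\omega,x))_n$, then $\nu=\Pi_*\mu$.
   Context: $I=[0,1]$, $R(x)=1-x$. $F(\xi,p)=(\sigma(\xi),f_{\xi_0}(p))$ on $\Sigma_N\times I$, $\Sigma_N=\{1,\ldots,N\}^{\mathbb Z}$, with $f_i$ $C^1$-diffeomorphisms onto their images. $\mathcal I_P$ / $\mathcal I_R$: indices of orientation preserving / reversing $f_i$. $A=(a_{ij})_{i,j=1}^{2N}$ with $a_{ij}=1$ if ($i\in\mathcal I_P$, $j\le N$), or ($i\in\mathcal I_R$, $j>N$), or ($i-N\in\mathcal I_P$, $j>N$), or ($i-N\in\mathcal I_R$, $j\le N$), else $0$; $\Sigma_A$ the $A$-admissible sequences in $\{1,\ldots,2N\}^{\mathbb Z}$ with shift $\sigma_A$; $\pi(\omega)_n=\overline{\omega_n}$ ($\overline i=i$ for $i\le N$, $\overline i=i-N$ otherwise). $G(\omega,x)=(\sigma_A(\omega),g_{\omega_0}(x))$ with $g_i=f_i$, $g_{i+N}=R\circ f_i\circ R$ ($i\in\mathcal I_P$), $g_i=R\circ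 f_i$, $g_{i+N}=f_i\circ R$ ($i\in\mathcal I_R$). $C=\{\omega\colon\omega_0\le N\}$; $\Pi(\omega,x)=(\pi(\omega),x)$ if $\omega\in C$, $(\pi(\omega),R(x))$ otherwise. *)

From HB Require Import structures.
From mathcomp Require Import all_boot all_order all_algebra.
From mathcomp Require Import all_classical all_reals all_analysis.
Set Implicit Arguments. Unset Strict Implicit. Unset Printing Implicit Defensive.
Import Order.TTheory GRing.Theory Num.Theory.
Import numFieldNormedType.Exports.
Local Open Scope classical_set_scope.
Local Open Scope ring_scope.

Definition Icc (R : realType) : Type := set_type (`[0, 1]%classic : set R).
HB.instance Definition _ (R : realType) := Topological.on (Icc R).

Lemma Icc0P (R : realType) : (0 : R) \in (`[0, 1]%classic : set R).
Proof. by apply/mem_set; rewrite /= in_itv /= lexx ler01. Qed.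
HB.instance Definition _ (R : realType) :=
  isPointed.Build (Icc R) (exist _ 0 (Icc0P R)).


Definition Sym (n : nat) : Type := discrete_topology 'I_n.+1.
HB.instance Definition _ n := Choice.on (Sym n).
HB.instance Definition _ n := isPointed.Build (Sym n) (ord0 : 'I_n.+1).
HB.instance Definition _ n := Topological.on (Sym n).

Definition SigmaN (n : nat) : Type := {ptws int -> Sym n}.
HB.instance Definition _ n := Topological.on (SigmaN n).
HB.instance Definition _ n := Pointed.on (SigmaN n).

Definition shiftN n (xi : SigmaN n) : SigmaN n := fun k => xi (k + 1).

(* ---------- the alphabet {1,...,2N} of Sigma_A, encoded as 'I_(N+N) *)
Definition Sym2 (n : nat) : Type := discrete_topology 'I_(n.+1 + n.+1).
HB.instance Definition _ n := Choice.on (Sym2 n).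
HB.instance Definition _ n := isPointed.Build (Sym2 n) (lshift n.+1 (ord0 : 'I_n.+1)).
HB.instance Definition _ n := Topological.on (Sym2 n).

(* "s <= N" in the paper (first copy of the alphabet) *)
Definition first n (s : 'I_(n.+1 + n.+1)) : bool := (s < n.+1)%N.
(* the bar map: bar i = i for i <= N, bar i = i - N otherwise *)
Definition bar n (s : 'I_(n.+1 + n.+1)) : 'I_n.+1 :=
  match fintype.split s with inl i => i | inr i => i end.

(* the transition matrix A; P i <-> i \in I_P (orientation preserving) *)
Definition adm n (P : 'I_n.+1 -> bool) (s t : 'I_(n.+1 + n.+1)) : bool :=
  if first s then (if P (bar s) then first t else ~~ first t)
  else (if P (bar s) then ~~ first t else first t).

Definition FullA (n : nat) : Type := {ptws int -> Sym2 n}.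
HB.instance Definition _ n := Topological.on (FullA n).
HB.instance Definition _ n := Pointed.on (FullA n).

Definition admissible n (P : 'I_n.+1 -> bool) : set (FullA n) :=
  [set w | forall k : int, adm P (w k) (w (k + 1))].

Definition SigmaA n (P : 'I_n.+1 -> bool) : Type := set_type (admissible P).
Arguments SigmaA : clear implicits.
HB.instance Definition _ n P := Topological.on (SigmaA n P).

Lemma odd_absz_add1 (k : int) : odd (absz (k + 1)) = ~~ odd (absz k).
Proof.
case: k => m.
  by rewrite -[Posz m + 1]/(Posz (m + 1)%N) /= addn1.
rewrite NegzE.
have -> : (- Posz m.+1 + 1 = - Posz m)%R.
  by rewrite -addn1 PoszD opprD addrK.
by rewrite !abszN /= negbK.
Qed.

Definition pointA n (P : 'I_n.+1 -> bool) : FullA n :=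
  fun k => if P ord0 then lshift n.+1 (ord0 : 'I_n.+1)
           else if odd (absz k) then rshift n.+1 (ord0 : 'I_n.+1)
           else lshift n.+1 (ord0 : 'I_n.+1).

Lemma bar_lshift n (i : 'I_n.+1) : bar (lshift n.+1 i) = i.
Proof. by rewrite /bar; case: fintype.splitP => j /= Hj; apply: val_inj => //=;
  move: (ltn_ord i); rewrite Hj ltnNge leq_addr. Qed.

Lemma bar_rshift n (i : 'I_n.+1) : bar (rshift n.+1 i) = i.
Proof.
rewrite /bar; case: fintype.splitP => j /= Hj; apply: val_inj => //=.
  by move: (ltn_ord j); rewrite -Hj ltnNge leq_addr.
by move/eqP: Hj; rewrite eqn_add2l => /eqP.
Qed.

Lemma pointA_adm n P : admissible P (@pointA n P).
Proof.
move=> k; rewrite /pointA /adm.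
case HP: (P ord0); first by rewrite bar_lshift HP /first /=.
rewrite odd_absz_add1.
case: (odd (absz k)) => /=.
  by rewrite bar_rshift HP /first /= ltnNge leq_addr.
by rewrite bar_lshift HP /first /= ltnNge leq_addr.
Qed.

HB.instance Definition _ n P :=
  isPointed.Build (SigmaA n P) (exist _ (@pointA n P) (mem_set (@pointA_adm n P))).

Lemma shiftA_adm n P (w : SigmaA n P) :
  admissible P (fun k => (val w) (k + 1) : Sym2 n).
Proof. by move=> k; have := set_mem (valP w) (k + 1). Qed.

Definition shiftA n P (w : SigmaA n P) : SigmaA n P :=
  exist _ (fun k => (val w) (k + 1) : Sym2 n) (mem_set (shiftA_adm w)).

Lemma refl_in (R : realType) (x : Icc R) :
  (1 - val x) \in (`[0, 1]%classic : set R).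
Proof.
have := set_mem (valP x); rewrite /= in_itv /= => /andP[h0 h1].
by apply/mem_set; rewrite /= in_itv /= subr_ge0 h1 lerBlDr lerDl h0.
Qed.

Definition Refl (R : realType) (x : Icc R) : Icc R := exist _ (1 - val x) (refl_in x).

(* f is a C^1 diffeomorphism of I onto its image: injective, with a continuous
   nowhere vanishing derivative (one-sided at the endpoints, i.e. derivative
   within I). *)
Definition C1_diffeo_onto_image (R : realType) (h : Icc R -> Icc R) : Prop :=
  injective h /\
  exists dh : Icc R -> R, continuous dh /\ (forall x, dh x != 0) /\
    forall x : Icc R,
      (fun y : Icc R => (val (h y) - val (h x)) / (val y - val x))
        @ within (fun y => y != x) (nbhs x) --> dh x.

Definition orientation_preserving (R : realType) (h : Icc R -> Icc R) : Prop :=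
  forall x y : Icc R, val x < val y -> val (h x) < val (h y).
Definition orientation_reversing (R : realType) (h : Icc R -> Icc R) : Prop :=
  forall x y : Icc R, val x < val y -> val (h y) < val (h x).

Definition XN n (R : realType) : Type := (SigmaN n * Icc R)%type.
HB.instance Definition _ n R := Topological.on (XN n R).
HB.instance Definition _ n R := Pointed.on (XN n R).

Definition XA n (P : 'I_n.+1 -> bool) (R : realType) : Type :=
  (SigmaA n P * Icc R)%type.
Arguments XA : clear implicits.
HB.instance Definition _ n P R := Topological.on (XA n P R).
HB.instance Definition _ n P R := Pointed.on (XA n P R).

Definition skewF n R (f : 'I_n.+1 -> Icc R -> Icc R) (p : XN n R) : XN n R :=
  (shiftN p.1, f (p.1 0) p.2).

(* g_i = f_i, g_{i+N} = R o f_i o R (i in I_P);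
   g_i = R o f_i, g_{i+N} = f_i o R (i in I_R) *)
Definition gmap n R (P : 'I_n.+1 -> bool) (f : 'I_n.+1 -> Icc R -> Icc R)
    (s : 'I_(n.+1 + n.+1)) : Icc R -> Icc R :=
  let i := bar s in
  if first s then (if P i then f i else fun x => Refl (f i x))
  else (if P i then fun x => Refl (f i (Refl x)) else fun x => f i (Refl x)).

Definition skewG n R P (f : 'I_n.+1 -> Icc R -> Icc R) (p : XA n P R) : XA n P R :=
  (shiftA p.1, gmap P f (val p.1 0) p.2).

Definition piA n P (w : SigmaA n P) : SigmaN n := fun k => bar (val w k).

Definition Pi n R P (p : XA n P R) : XN n R :=
  (piA p.1, if first (val p.1 0) then p.2 else Refl p.2).

Definition Borel (T : ptopologicalType) := g_sigma_algebraType (@open T).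

Definition empirical (R : realType) (T : ptopologicalType) (h : T -> T) (x : T)
    (n : nat) : {measure set (Borel T) -> \bar R} :=
  mscale (n%:R^-1)%:nng (msum (fun i => @dirac _ (Borel T) (iter i h x) R) n).

Definition weak_star_cvg (R : realType) (T : ptopologicalType)
    (mu_ : nat -> {measure set (Borel T) -> \bar R})
    (mu : {measure set (Borel T) -> \bar R}) : Prop :=
  forall phi : T -> R, continuous phi ->
    (fun n => (\int[mu_ n]_x (phi x)%:E)%E) @ \oo
      --> (\int[mu]_x (phi x)%:E)%E.

Definition weak_star_limit_point (R : realType) (T : ptopologicalType)
    (mu_ : nat -> {measure set (Borel T) -> \bar R})
    (mu : {measure set (Borel T) -> \bar R}) : Prop :=
  exists s : nat -> nat, {homo s : m k / (m < k)%N} /\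
    weak_star_cvg (fun k => mu_ (s k)) mu.

From HB Require Import structures.
From mathcomp Require Import all_boot all_order all_algebra.
From mathcomp Require Import all_classical all_reals all_analysis.
From mathcomp Require Import measurable_realfun.
Import Order.TTheory GRing.Theory Num.Theory.
Import numFieldNormedType.Exports.
Local Open Scope classical_set_scope.
Local Open Scope ring_scope.
Set Implicit Arguments. Unset Strict Implicit. Unset Printing Implicit Defensive.

(** The map Pi semiconjugates the skew products, Pi \o G = F \o Pi: the
    admissibility of w_0 w_1 records exactly whether g_(w_0) is f_(bar w_0)
    conjugated by the reflection.  Hence Pi maps the G-orbit of (w, x) onto
    the F-orbit of Pi (w, x), so the integral of phi against nu_k (Pi (w, x))
    equals the integral of phi \o Pi against mu_k (w, x).  Along a
    subsequence with mu_k -> mu, the left side tends to the integral of phi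
    against nu and, Pi being continuous, the right side to the integral of
    phi \o Pi against mu, i.e. of phi against Pi_* mu.  Finally, in a
    metrizable space the indicator of an open set is an increasing limit of
    continuous functions (running maxima of Urysohn functions), so by monotone
    convergence two finite Borel measures with the same integrals of
    nonnegative continuous functions agree on open sets, hence everywhere. *)

Section borel_measures.
Variable R : realType.

Lemma continuous_measurable_fun (T U : ptopologicalType) (f : T -> U) :
  continuous f -> measurable_fun [set: Borel T] (f : Borel T -> Borel U).
Proof.
move=> cf; apply: (@measurability _ _ (Borel T) (Borel U) _ _ (@open U) erefl).
move=> _ [B oB <-]; rewrite setTI.
by apply: sub_sigma_algebra; move/continuousP : cf; apply.
Qed.

Lemma continuous_measurable_realfun (T : ptopologicalType) (phi : T -> R) :
  continuous phi -> measurable_fun [set: Borel T] (phi : Borel T -> R).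
Proof.
move=> cphi; apply: (measurability _ (RGenOpens.measurableE R)).
move=> _ [_ [a [b ->]] <-]; rewrite setTI.
apply: sub_sigma_algebra; move/continuousP : cphi; apply.
exact: interval_open.
Qed.

Lemma continuous_measurable_EFin (T : ptopologicalType) (phi : T -> R) :
  continuous phi ->
  measurable_fun [set: Borel T] (fun x : Borel T => (phi x)%:E).
Proof.
move=> cphi; apply: measurableT_comp => //.
exact: continuous_measurable_realfun.
Qed.

Definition open_indicator_approx (T : topologicalType) : Prop :=
  forall U : set T, open U -> exists f_ : nat -> T -> R,
    [/\ forall k, continuous (f_ k), forall k x, 0 <= f_ k x,
        forall x, nondecreasing_seq (f_ ^~ x) &
        forall x, f_ ^~ x @ \oo --> (\1_U x : R)].

Lemma open_indicator_approx_of_separators (T : topologicalType) (U : set T)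
    (u : nat -> T -> R) :
  (forall j, continuous (u j)) -> (forall j x, 0 <= u j x <= 1) ->
  (forall j x, ~ U x -> u j x = 0) -> (forall x, U x -> exists j, u j x = 1) ->
  exists f_ : nat -> T -> R,
    [/\ forall k, continuous (f_ k), forall k x, 0 <= f_ k x,
        forall x, nondecreasing_seq (f_ ^~ x) &
        forall x, f_ ^~ x @ \oo --> (\1_U x : R)].
Proof.
move=> cu u01 u0 u1.
pose f_ := fix f_ k x := if k is k'.+1 then Num.max (f_ k' x) (u k' x) else 0.
have fS k x : f_ k.+1 x = Num.max (f_ k x) (u k x) by [].
have f_nd x : nondecreasing_seq (f_ ^~ x).
  apply: homo_leq => // [? ? ?|k]; first exact: le_trans.
  by rewrite fS le_max lexx.
have f_le1 k x : f_ k x <= 1.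
  by elim: k => [|k IH]; rewrite ?ler01 // fS ge_max IH; case/andP: (u01 k x).
exists f_; split => //.
- elim=> [|k IH] x; first exact: cvg_cst.
  exact: continuous_max (IH x) (cu k x).
- by elim=> [|k IH] x //; rewrite fS le_max IH.
move=> x; have [Ux|nUx] := pselect (U x); last first.
  have f0 k : f_ k x = 0 by elim: k => // k IH; rewrite fS IH u0 // maxxx.
  by rewrite indicE memNset //; apply: cvg_near_cst; exact: nearW.
rewrite indicE mem_set //; have [j uj1] := u1 x Ux.
apply: cvg_near_cst; exists j.+1 => // k /= jk.
apply/eqP; rewrite eq_le f_le1 -uj1 /=.
by apply: le_trans (f_nd x _ _ jk); rewrite fS le_max lexx orbT.
Qed.

Lemma pseudoMetric_open_indicator_approx (T : pseudoMetricType R) :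
  open_indicator_approx T.
Proof.
move=> U oU.
have r_gt0 j : 0 < j.+1%:R^-1 :> R by rewrite invr_gt0 ltr0Sn.
pose B j := [set x | ball x j.+1%:R^-1 `<=` U].
have sep j : uniform_separator (~` U) (B j).
  apply: uniform_separatorW; exists [set pq | ball pq.1 j.+1%:R^-1 pq.2].
    exact: (entourage_ball _ (PosNum (r_gt0 j))).
  apply/seteqP; split=> // [[a b]] [[/= nUa Bb] ab]; apply: nUa; apply: Bb.
  exact: ball_sym.
apply: (open_indicator_approx_of_separators
  (u := fun j => Urysohn (~` U) (B j))).
- by move=> j; exact: Urysohn_continuous.
- move=> j x; have : (`[0, 1]%classic : set R) (Urysohn (~` U) (B j) x).
    by apply: Urysohn_range; exists x.
  by rewrite /= in_itv.
- by move=> j x nUx; apply: (Urysohn_sub0 (sep j)); exists x.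
move=> x Ux; have /nbhs_ballP[e e_gt0 be] : nbhs x U by exact: open_nbhs_nbhs.
have [j _ je] := near_infty_natSinv_lt (PosNum e_gt0).
exists j; apply: (Urysohn_sub1 (sep j)); exists x => //= y xy.
by apply: be; apply: le_ball xy; exact/ltW/(je j (leqnn j)).
Qed.

Lemma integral_cvg_measure_open (T : ptopologicalType)
    (m : {measure set (Borel T) -> \bar R}) (U : set T) (f_ : nat -> T -> R) :
  open U -> (forall k, continuous (f_ k)) -> (forall k x, 0 <= f_ k x) ->
  (forall x, nondecreasing_seq (f_ ^~ x)) ->
  (forall x, f_ ^~ x @ \oo --> (\1_U x : R)) ->
  (\int[m]_x (f_ k x)%:E @[k --> \oo] --> m U)%E.
Proof.
move=> oU cf f0 fnd fcv.
have mU : measurable (U : set (Borel T)) by exact: sub_sigma_algebra.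
have -> : m U = (\int[m]_x (\1_U x)%:E)%E by rewrite integral_indic // setIT.
have := @cvg_monotone_convergence _ (Borel T) R m setT measurableT
  (fun k x => (f_ k x)%:E) (fun k => continuous_measurable_EFin (cf k)).
have -> : (fun x : Borel T => limn (fun k => (f_ k x)%:E)) =
          (fun x => (\1_U x)%:E).
  apply/funext => x; apply: cvg_lim => //.
  by apply: cvg_EFin; [exact: nearW | exact: fcv].
apply.
- by move=> k x _; rewrite lee_fin.
- by move=> x _ a b ab; rewrite lee_fin; exact: fnd.
Qed.

Lemma measure_eq_integral_continuous (T : ptopologicalType)
    (m1 m2 : {measure set (Borel T) -> \bar R}) :
  open_indicator_approx T -> (m1 setT < +oo)%E ->
  (forall phi : T -> R, continuous phi -> (forall x, 0 <= phi x) ->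
     (\int[m1]_x (phi x)%:E = \int[m2]_x (phi x)%:E)%E) ->
  forall A, measurable A -> m1 A = m2 A.
Proof.
move=> approx m1T m1m2.
apply: (@measure_unique _ R (Borel T) (@open T) (fun=> setT) erefl) => //.
- exact: openI.
- by move=> k; exact: openT.
- by apply/seteqP; split => // x _; exists 0%N.
move=> U oU; have [f_ [cf f0 fnd fcv]] := approx U oU.
have m2_cvg := integral_cvg_measure_open (m := m2) oU cf f0 fnd fcv.
have := integral_cvg_measure_open (m := m1) oU cf f0 fnd fcv.
under eq_fun do rewrite m1m2 //.
by move=> m1_cvg; exact: cvg_unique _ m1_cvg m2_cvg.
Qed.

Lemma ge0_integral_empirical (T : ptopologicalType) (h : T -> T) (x : T)
    (k : nat) (g : Borel T -> \bar R) :
  measurable_fun [set: Borel T] g -> (forall y, (0 <= g y)%E) ->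
  (\int[empirical R h x k]_y g y =
   (k%:R^-1)%:E * \sum_(i < k) g (iter i h x))%E.
Proof.
move=> mg g0; rewrite ge0_integral_mscale //= ge0_integral_measure_sum //.
congr (_ * _)%E; apply: eq_bigr => i _.
by rewrite integral_dirac // diracT mul1e.
Qed.

Lemma homo_ltn_cvgn_infty (s : nat -> nat) :
  {homo s : m k / (m < k)%N} -> s @ \oo --> \oo.
Proof.
move=> s_incr; apply/cvgnyPge => a; exists a => // k /= ak.
apply: leq_trans ak _; elim: k => // k IH.
by apply: leq_ltn_trans IH _; exact: s_incr.
Qed.

Lemma semiconj_empirical_limit (X Y : ptopologicalType) (g : X -> X)
    (f : Y -> Y) (pi : X -> Y) (x : X) (nu : {measure set (Borel Y) -> \bar R})
    (mu : {measure set (Borel X) -> \bar R}) :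
  continuous pi -> (forall p, pi (g p) = f (pi p)) ->
  weak_star_cvg (empirical R f (pi x)) nu ->
  weak_star_limit_point (empirical R g x) mu ->
  forall phi : Y -> R, continuous phi -> (forall y, 0 <= phi y) ->
  (\int[nu]_y (phi y)%:E = \int[mu]_p (phi (pi p))%:E)%E.
Proof.
move=> cpi pi_g nu_lim [s [s_incr mu_lim]] phi cphi phi0.
have cphi_pi : continuous (phi \o pi).
  by move=> p; apply: continuous_comp; [exact: cpi | exact: cphi].
have pi_iter i p : pi (iter i g p) = iter i f (pi p).
  by elim: i => //= i IH; rewrite pi_g IH.
have empirical_pi k : (\int[empirical R f (pi x) k]_y (phi y)%:E =
                       \int[empirical R g x k]_p (phi (pi p))%:E)%E.
  rewrite !ge0_integral_empirical //.
  - by congr (_ * _)%E; apply: eq_bigr => i _; rewrite pi_iter.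
  - exact: continuous_measurable_EFin.
  - by move=> p; rewrite lee_fin.
  - exact: continuous_measurable_EFin.
have := cvg_comp _ _ (homo_ltn_cvgn_infty s_incr) (nu_lim phi cphi).
under eq_fun do rewrite /= empirical_pi.
move=> nu_lim_s; exact: cvg_unique _ nu_lim_s (mu_lim _ cphi_pi).
Qed.

End borel_measures.

Lemma continuous_ptws (X : topologicalType) (I : Type) (K : topologicalType)
    (g : X -> {ptws I -> K}) :
  (forall i, continuous (fun x => g x i)) -> continuous g.
Proof.
move=> cg x; apply/cvg_sup => i U.
have /= -> := @nbhsE (initial_topology (fun f : {ptws I -> K} => f i)) (g x).
case=> B [[C oC <-] Cx] /filterS; apply.
by apply: (cg i x); exact: open_nbhs_nbhs.
Qed.

Lemma discrete_continuous (X : discreteTopologicalType) (Y : topologicalType)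
    (f : X -> Y) : continuous f.
Proof.
move=> x U /nbhs_singleton Ufx; rewrite /= nbhs_simpl.
by apply: filterS (discrete_set1 x) => y ->.
Qed.

Lemma Refl_continuous (R : realType) : continuous (@Refl R).
Proof.
apply: (@continuous_comp_initial _ _ _ (@set_val R `[0, 1]) (@Refl R)) => x /=.
apply: (@cvgB _ _ _ (nbhs x)); first exact: cvg_cst.
exact: initial_continuous.
Qed.

Lemma ReflK (R : realType) : involutive (@Refl R).
Proof. by move=> x; apply: val_inj => /=; rewrite subKr. Qed.

Section skew_products.
Variables (R : realType) (n : nat) (P : 'I_n.+1 -> bool).

Lemma coord_continuous (k : int) :
  continuous (fun w : SigmaA n P => val w k : Sym2 n).
Proof.
move=> w; have sval_cont : continuous (fun w : SigmaA n P => val w : FullA n).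
  exact: (@initial_continuous _ _ set_val).
exact: continuous_comp (sval_cont w) (@proj_continuous _ (fun=> Sym2 n) k _).
Qed.

Lemma near_coord (w : SigmaA n P) (k : int) :
  \forall w' \near w, val w' k = val w k.
Proof. exact: coord_continuous (discrete_set1 _). Qed.

Lemma piA_continuous : continuous (@piA n P).
Proof.
apply: (@continuous_ptws _ int (Sym n)) => k w.
exact: continuous_comp (@coord_continuous k w)
  (@discrete_continuous (Sym2 n) (Sym n) (@bar n) _).
Qed.

Lemma Pi_continuous : continuous (@Pi n R P : XA n P R -> XN n R).
Proof.
move=> q.
pose branch (q : XA n P R) := if first (val q.1 0) then q.2 else Refl q.2.
apply: (@cvg_pair _ _ _ _ (nbhs (piA q.1 : SigmaN n)) (nbhs (branch q)) _ _ _
  (fun q : XA n P R => piA q.1) branch).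
  by apply: continuous_comp; [exact: cvg_fst | exact: piA_continuous].
have same_branch : \forall q' \near q, val q'.1 0 = val q.1 0.
  exact: cvg_fst (near_coord q.1 0).
have fixed_branch_cvg :
    (if first (val q.1 0) then q'.2 else Refl q'.2) @[q' --> q] --> branch q.
  rewrite /branch; case: (first _); first exact: cvg_snd.
  apply: (continuous_comp (f := fun q' : XA n P R => q'.2) (g := @Refl R)).
    exact: cvg_snd.
  exact: Refl_continuous.
apply: cvg_trans fixed_branch_cvg; apply: near_eq_cvg.
by near=> q'; rewrite /branch (near same_branch q').
Unshelve. all: by end_near.
Qed.

Lemma Pi_skewG (f : 'I_n.+1 -> Icc R -> Icc R) (p : XA n P R) :
  Pi (skewG f p) = skewF f (Pi p).
Proof.
case: p => w x; rewrite /Pi /skewG /skewF /=; congr pair.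
have := set_mem (valP w) 0; rewrite /adm /gmap /piA /= add0r.
by case: (first _); case: (P _); case: (first _) => //= _; rewrite ?ReflK.
Qed.

End skew_products.

(* The paper's alphabet {1,...,N} is 'I_n.+1 (paper's N = n+1 >= 1);
   P i = true  <->  i \in I_P,  P i = false  <->  i \in I_R. *)
Theorem lemma3p28 (R : realType) (n : nat)
    (f : 'I_n.+1 -> Icc R -> Icc R) (P : 'I_n.+1 -> bool)
    (hf : forall i, C1_diffeo_onto_image (f i))
    (hP : forall i, P i -> orientation_preserving (f i))
    (hR : forall i, ~~ P i -> orientation_reversing (f i))
    (w : SigmaA n P) (x : Icc R)
    (nu : probability (Borel (XN n R)) R)
    (mu : probability (Borel (XA n P R)) R) :
  weak_star_cvg (empirical R (@skewF n R f) (@Pi n R P (w, x))) nu ->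
  weak_star_limit_point (empirical R (@skewG n R P f) ((w, x) : XA n P R)) mu ->
  forall A : set (Borel (XN n R)), measurable A ->
    nu A = pushforward mu (@Pi n R P : Borel (XA n P R) -> Borel (XN n R)) A.
Proof.
move=> nu_lim mu_lim A mA.
have mPi := continuous_measurable_fun (@Pi_continuous R n P).
(* The measure structure of [pushforward mu Pi] depends on [mPi], so it is
   not inferred. *)
pose Pi_mu :=
  measure_function_pushforward__canonical__measure_function_Measure mu mPi.
apply: (@measure_eq_integral_continuous R _ nu Pi_mu) => //.
- exact: pseudoMetric_open_indicator_approx.
- by move: (probability_setT nu) => /= ->; exact: ltey.
move=> phi cphi phi0; rewrite ge0_integral_pushforward //=.
- rewrite preimage_setT.
  apply: semiconj_empirical_limit nu_lim mu_lim _ cphi phi0.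
  + exact: Pi_continuous.
  + exact: Pi_skewG.
- exact: continuous_measurable_EFin.
- by move=> y _; rewrite lee_fin.
Qed.
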